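(* Let $D\subset\mathbb{R}^2$ be an open set and let $\phi:D\to\mathbb{R}$ be a continuously differentiable function. Consider the system of Keyfitz–Kranzer type \[ u_t+(u\,\phi(u,v))_x=0,\qquad v_t+(v\,\phi(u,v))_x=0, \] with flux $F(u,v)=(u\phi(u,v),\,v\phi(u,v))$. Let $\eta:D\to\mathbb{R}$ be a $C^1$ function which is Lipschitz in a neighborhood of the origin, and let $q(u,v)=\psi(u,v)+\eta(u,v)\phi(u,v)$, where $\psi:D\to\mathbb{R}$ is a $C^1$ function satisfying \[ \nabla\psi(u,v)=\big((u,v)\cdot\nabla\eta(u,v)-\eta(u,v)\big)\,\nabla\phi(u,v)\quad\text{on } D. \] Then $(\eta,q)$ is an entropy–entropy flux pair for this system, i.e. $\nabla\eta(u,v)\,DF(u,v)=\nabla q(u,v)$ on $D$, where $DF$ is the Jacobian matrix of $F$. Moreover, if $\eta$ is convex, then $(\eta,q)$ is a convex entropy–entropy flux pair.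
   Context: For a system $U_t+F(U)_x=0$ with $U=(u,v)$, a pair of functions $\eta,q$ is called an entropy–entropy flux pair if $\nabla\eta(U)\,DF(U)=\nabla q(U)$ (gradients written as row vectors); it is called a convex entropy–entropy flux pair if in addition $\eta$ is convex. *)

From Stdlib Require Import Reals Lra.
From Coquelicot Require Import Coquelicot.
Open Scope R_scope.

(* Subsets of R^2 are predicates D : R -> R -> Prop; functions on R^2 are
   curried f : R -> R -> R (values outside D are irrelevant). *)

Definition dist2 (u v u' v' : R) : R := sqrt ((u - u') ^ 2 + (v - v') ^ 2).

Definition open2 (D : R -> R -> Prop) : Prop :=
  forall u v, D u v -> exists eps, 0 < eps /\
    forall u' v', dist2 u' v' u v < eps -> D u' v'.

Definition C1_on (D : R -> R -> Prop) (f : R -> R -> R) : Prop :=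
  exists fu fv : R -> R -> R, forall u v, D u v ->
    differentiable_pt_lim f u v (fu u v) (fv u v) /\
    continuity_2d_pt fu u v /\ continuity_2d_pt fv u v.

Definition lipschitz_near_origin (D : R -> R -> Prop) (f : R -> R -> R) : Prop :=
  exists r L, 0 < r /\ forall u v u' v',
    D u v -> D u' v' -> dist2 u v 0 0 < r -> dist2 u' v' 0 0 < r ->
    Rabs (f u v - f u' v') <= L * dist2 u v u' v'.

(* Entropy-entropy flux pair for U_t + F(U)_x = 0, F = (F1, F2), on D:
   grad eta (u,v) * DF(u,v) = grad q (u,v) (gradients as row vectors),
   DF = [[dF1/du, dF1/dv], [dF2/du, dF2/dv]]. *)
Definition entropy_pair (D : R -> R -> Prop) (F1 F2 eta q : R -> R -> R) : Prop :=
  forall u v, D u v ->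
    exists e1 e2 a11 a12 a21 a22 q1 q2,
      differentiable_pt_lim eta u v e1 e2 /\
      differentiable_pt_lim F1 u v a11 a12 /\
      differentiable_pt_lim F2 u v a21 a22 /\
      differentiable_pt_lim q u v q1 q2 /\
      e1 * a11 + e2 * a21 = q1 /\
      e1 * a12 + e2 * a22 = q2.

Definition convex_on (D : R -> R -> Prop) (eta : R -> R -> R) : Prop :=
  forall u v u' v' t, 0 <= t <= 1 ->
    (forall s, 0 <= s <= 1 -> D (s * u + (1 - s) * u') (s * v + (1 - s) * v')) ->
    eta (t * u + (1 - t) * u') (t * v + (1 - t) * v')
      <= t * eta u v + (1 - t) * eta u' v'.

Definition convex_entropy_pair (D : R -> R -> Prop) (F1 F2 eta q : R -> R -> R) : Prop :=
  entropy_pair D F1 F2 eta q /\ convex_on D eta.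

From Stdlib Require Import Reals.
From Coquelicot Require Import Coquelicot.
Open Scope R_scope.

(* By the product rule, [grad eta . DF = (u.grad eta) grad phi + phi grad eta],
   and the hypothesis on [grad psi] makes this equal to
   [grad psi + phi grad eta + eta grad phi = grad q]. *)

Lemma differentiable_pt_lim_plus (f g : R -> R -> R) (x y fx fy gx gy : R) :
  differentiable_pt_lim f x y fx fy -> differentiable_pt_lim g x y gx gy ->
  differentiable_pt_lim (fun u v => f u v + g u v) x y (fx + gx) (fy + gy).
Proof.
  intros Hf Hg.
  apply filterdiff_differentiable_pt_lim in Hf, Hg.
  apply filterdiff_differentiable_pt_lim.
  eapply filterdiff_ext_lin; [exact (filterdiff_plus_fct _ _ _ _ Hf Hg) |].
  intros [p q]; simpl; unfold plus; simpl; ring.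
Qed.

Lemma differentiable_pt_lim_mult (f g : R -> R -> R) (x y fx fy gx gy : R) :
  differentiable_pt_lim f x y fx fy -> differentiable_pt_lim g x y gx gy ->
  differentiable_pt_lim (fun u v => f u v * g u v) x y
    (fx * g x y + f x y * gx) (fy * g x y + f x y * gy).
Proof.
  intros Hf Hg.
  apply filterdiff_differentiable_pt_lim in Hf, Hg.
  apply filterdiff_differentiable_pt_lim.
  eapply filterdiff_ext_lin;
    [exact (filterdiff_mult_fct (K := R_AbsRing) _ _ _ _ _ Rmult_comm Hf Hg) |].
  intros [p q]; simpl; unfold plus, mult; simpl; ring.
Qed.

Lemma differentiable_pt_lim_fst (x y : R) :
  differentiable_pt_lim (fun u _ => u) x y 1 0.
Proof. exact (differentiable_pt_lim_proj1_0 _ x y 1 (derivable_pt_lim_id x)). Qed.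

Lemma differentiable_pt_lim_snd (x y : R) :
  differentiable_pt_lim (fun _ v => v) x y 0 1.
Proof.
  apply filterdiff_differentiable_pt_lim.
  eapply filterdiff_ext_lin;
    [exact (filterdiff_linear (fun t : R * R => snd t) (is_linear_snd (U := R_NormedModule) (V := R_NormedModule))) |].
  intros [p q]; simpl; rewrite Rmult_0_r, Rmult_1_r, Rplus_0_l; reflexivity.
Qed.

Lemma keyfitz_kranzer_entropy_pair (D : R -> R -> Prop) (phi eta psi : R -> R -> R) :
  C1_on D phi -> C1_on D eta -> C1_on D psi ->
  (forall u v, D u v ->
     forall e1 e2 p1 p2 s1 s2,
       differentiable_pt_lim eta u v e1 e2 ->
       differentiable_pt_lim phi u v p1 p2 ->
       differentiable_pt_lim psi u v s1 s2 ->
       s1 = (u * e1 + v * e2 - eta u v) * p1 /\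
       s2 = (u * e1 + v * e2 - eta u v) * p2) ->
  entropy_pair D (fun u v => u * phi u v) (fun u v => v * phi u v) eta
    (fun u v => psi u v + eta u v * phi u v).
Proof.
  intros [pu [pv Hphi]] [eu [ev Heta]] [su [sv Hpsi]] Hgrad u v Duv.
  destruct (Hphi u v Duv) as [Dphi _].
  destruct (Heta u v Duv) as [Deta _].
  destruct (Hpsi u v Duv) as [Dpsi _].
  destruct (Hgrad u v Duv _ _ _ _ _ _ Deta Dphi Dpsi) as [Hs1 Hs2].
  do 8 eexists.
  split; [exact Deta |].
  split; [exact (differentiable_pt_lim_mult _ _ _ _ _ _ _ _ (differentiable_pt_lim_fst u v) Dphi) |].
  split; [exact (differentiable_pt_lim_mult _ _ _ _ _ _ _ _ (differentiable_pt_lim_snd u v) Dphi) |].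
  split; [exact (differentiable_pt_lim_plus _ _ _ _ _ _ _ _ Dpsi
                   (differentiable_pt_lim_mult _ _ _ _ _ _ _ _ Deta Dphi)) |].
  rewrite Hs1, Hs2; split; ring.
Qed.

Theorem lemma2 (D : R -> R -> Prop) (phi eta psi : R -> R -> R) :
  open2 D ->
  C1_on D phi ->
  C1_on D eta ->
  lipschitz_near_origin D eta ->
  C1_on D psi ->
  (forall u v, D u v ->
     forall e1 e2 p1 p2 s1 s2,
       differentiable_pt_lim eta u v e1 e2 ->
       differentiable_pt_lim phi u v p1 p2 ->
       differentiable_pt_lim psi u v s1 s2 ->
       s1 = (u * e1 + v * e2 - eta u v) * p1 /\
       s2 = (u * e1 + v * e2 - eta u v) * p2) ->
  let F1 := fun u v => u * phi u v in
  let F2 := fun u v => v * phi u v in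
  let q := fun u v => psi u v + eta u v * phi u v in
  entropy_pair D F1 F2 eta q /\
  (convex_on D eta -> convex_entropy_pair D F1 F2 eta q).
Proof.
  intros _ Cphi Ceta _ Cpsi Hgrad F1 F2 q.
  pose proof (keyfitz_kranzer_entropy_pair D phi eta psi Cphi Ceta Cpsi Hgrad) as pair.
  split; [exact pair |].
  intros convex_eta; split; assumption.
Qed.
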